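(* Let $\mathbb O=\{-m,\dots,0,\dots,M\}$ with integers $m,M\ge1$, and $\theta=0$. For every $x(0)\in\mathbb O^n$: if there exists a finite legal update sequence starting from $x(0)$ along which the opinion trajectory reaches the consensus state $(0,\dots,0)$, then there exists a finite legal update sequence starting from $x(0)$ containing no crossing update along which the opinion trajectory reaches $(0,\dots,0)$.
   Context: Let $n\ge1$, $\mathcal V=\{1,\dots,n\}$, and let $W=(w_{ij})$ be an $n\times n$ row-stochastic matrix. For $x\in\mathbb O^n$, $i\in\mathcal V$, $z\in\mathbb O$, define $C^i_{\mathrm{social}}(z;x)=\sum_{j=1}^n w_{ij}|z-x_j|$ and $P_i(x)=\{z\in\mathbb O: C^i_{\mathrm{social}}(z;x)\le C^i_{\mathrm{social}}(x_i;x),\ |z-\theta|\le |x_i-\theta|\}$. A legal update sequence from $x(0)$ is a finite sequence $(i_1,z_1),\dots,(i_T,z_T)$ with $i_t\in\mathcal V$, generating $x(1),\dots,x(T)$ where $x(t)$ is obtained from $x(t-1)$ by setting coordinate $i_t$ to $z_t$, such that $z_t\in P_{i_t}(x(t-1))$ for every $t$. The update at step $t$ is a crossing update if $(x_{i_t}(t)-\theta)(x_{i_t}(t-1)-\theta)<0$. *)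

From mathcomp Require Import all_boot all_order all_algebra.
From mathcomp Require Import reals.
Set Implicit Arguments. Unset Strict Implicit. Unset Printing Implicit Defensive.
Import Order.TTheory GRing.Theory Num.Theory.
Local Open Scope ring_scope.

Definition inO (m M : nat) (z : int) : bool := (- (m%:Z) <= z) && (z <= M%:Z).

Definition state (n : nat) := {ffun 'I_n -> int}.

Definition row_stochastic (R : realType) (n : nat) (W : 'M[R]_n) : Prop :=
  (forall i j, 0 <= W i j) /\ (forall i, \sum_(j < n) W i j = 1).

Definition C_social (R : realType) (n : nat) (W : 'M[R]_n) (x : state n)
  (i : 'I_n) (z : int) : R :=
  \sum_(j < n) W i j * (`|z - x j|%:~R).

Definition inP (R : realType) (m M : nat) (theta : int) (n : nat) (W : 'M[R]_n)
  (x : state n) (i : 'I_n) (z : int) : Prop :=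
  [/\ inO m M z,
      C_social W x i z <= C_social W x i (x i) &
      `|z - theta| <= `|x i - theta| ].


Definition upd (n : nat) (x : state n) (i : 'I_n) (z : int) : state n :=
  [ffun j => if j == i then z else x j].

Fixpoint legal (R : realType) (m M : nat) (theta : int) (n : nat) (W : 'M[R]_n)
  (x : state n) (s : seq ('I_n * int)) : Prop :=
  match s with
  | [::] => True
  | (i, z) :: s' => inP m M theta W x i z /\ legal m M theta W (upd x i z) s'
  end.

Fixpoint traj (n : nat) (x : state n) (s : seq ('I_n * int)) : seq (state n) :=
  match s with
  | [::] => [:: x]
  | (i, z) :: s' => x :: traj (upd x i z) s'
  end.

Fixpoint no_crossing (n : nat) (theta : int) (x : state n)
  (s : seq ('I_n * int)) : bool :=
  match s with
  | [::] => true
  | (i, z) :: s' => ~~ ((z - theta) * (x i - theta) < 0)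
                    && no_crossing theta (upd x i z) s'
  end.

Definition consensus0 (n : nat) : state n := [ffun => 0].

(* Shadow every legal trajectory x(t) by a trajectory y(t) in which each opinion is either
   x_j(t) or 0.  An update of x that stays on its side of 0 is copied by y, one that crosses
   0 is replaced by resetting the agent to 0.  Both are legal for y: pulling neighbours to 0
   only increases the cost gain of moving towards 0 on one side, and if a crossing move does
   not raise the cost then, by convexity of the cost in z, neither does the move to 0, which
   lies between the old and new opinion.  Once x reaches consensus at 0, so does y. *)
From mathcomp Require Import all_boot all_order all_algebra.
From mathcomp Require Import reals zify ring.
Set Implicit Arguments. Unset Strict Implicit. Unset Printing Implicit Defensive.
Import Order.TTheory GRing.Theory Num.Theory.
Local Open Scope ring_scope.

Lemma ler_norm_shrink_shift (z x a : int) :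
  0 <= z * x -> `|z| <= `|x| -> `|z| - `|x| <= `|z - a| - `|x - a|.
Proof. by move=> zx_ge0 zx_le; nia. Qed.

(* 0 is the convex combination of x and z with weights |z| and |x|, up to the factor |x| + |z|. *)
Lemma ler_norm_convex_at0 (z x a : int) :
  z * x < 0 -> (`|x| + `|z|) * `|a| <= `|x| * `|z - a| + `|z| * `|x - a|.
Proof.
move=> zx_lt0; have -> : `|x| + `|z| = `|x - z| by nia.
rewrite -!normrM.
have -> : (x - z) * a = z * (x - a) - x * (z - a) by ring.
by rewrite [X in _ <= X]addrC ler_normB.
Qed.

Lemma inO0 (m M : nat) : inO m M 0.
Proof. by rewrite /inO; apply/andP; split; lia. Qed.

Section ResetShadow.
Variables (R : realType) (n m M : nat) (W : 'M[R]_n).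
Hypothesis W_ge0 : forall i j, 0 <= W i j.

Definition partial_reset (x y : state n) : Prop := forall j, y j = x j \/ y j = 0.

Lemma partial_reset_refl (x : state n) : partial_reset x x.
Proof. by left. Qed.

Lemma partial_reset_consensus0 (x y : state n) :
  partial_reset x y -> x = consensus0 n -> y = consensus0 n.
Proof.
move=> xy x0; apply/ffunP => j; rewrite ffunE.
by case: (xy j) => ->; rewrite ?x0 ?ffunE.
Qed.

Lemma C_social_gain_reset (x y : state n) (i : 'I_n) (z : int) : partial_reset x y -> y i = x i ->
  0 <= z * x i -> `|z| <= `|x i| ->
  C_social W y i z - C_social W y i (y i) <= C_social W x i z - C_social W x i (x i).
Proof.
move=> xy yi zx_ge0 zx_le; rewrite /C_social yi -!sumrB.
apply: ler_sum => j _; rewrite -!mulrBr ler_wpM2l // -!intrB ler_int.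
by case: (xy j) => ->; rewrite ?subr0 ?ler_norm_shrink_shift.
Qed.

Lemma C_social0_le_crossing (x : state n) (i : 'I_n) (z : int) : z * x i < 0 ->
  C_social W x i z <= C_social W x i (x i) -> C_social W x i 0 <= C_social W x i (x i).
Proof.
move=> zx_lt0 Cz_le.
have sum_gt0 : (0 : R) < (`|x i| + `|z|)%:~R by rewrite ltr0z; nia.
rewrite -(ler_pM2r sum_gt0).
have convex : C_social W x i 0 * (`|x i| + `|z|)%:~R <=
    `|x i|%:~R * C_social W x i z + `|z|%:~R * C_social W x i (x i).
  rewrite /C_social !mulr_sumr mulr_suml -big_split /=.
  apply: ler_sum => j _.
  rewrite -mulrA [_%:~R * (W i j * _)]mulrCA [_%:~R * (W i j * _)]mulrCA.
  rewrite -mulrDr ler_wpM2l // -!intrM -intrD ler_int.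
  by rewrite sub0r normrN mulrC ler_norm_convex_at0.
apply: (le_trans convex).
by rewrite intrD mulrDr [X in _ <= X + _]mulrC [X in _ <= _ + X]mulrC lerD2r ler_wpM2l.
Qed.

Lemma inP_reset_step (x y : state n) (i : 'I_n) (z : int) : partial_reset x y -> inP m M 0 W x i z ->
  exists2 v, inP m M 0 W y i v /\ ~~ (v * y i < 0)
           & partial_reset (upd x i z) (upd y i v).
Proof.
move=> xy [zO Cz_le]; rewrite !subr0 => zx_le.
have reset_at v : y i = x i /\ v = z \/ v = 0 ->
    partial_reset (upd x i z) (upd y i v).
  move=> vi j; rewrite !ffunE; case: (j == i); last exact: xy.
  by case: vi => [[_ ->] | ->]; [left | right].
have [/andP [/eqP yi zx_ge0] | not_copy] := boolP ((y i == x i) && (0 <= z * x i)).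
  exists z; last by apply: reset_at; left.
  split; last by rewrite yi -leNgt.
  split => //; last by rewrite !subr0 yi.
  by rewrite -subr_le0 (le_trans (C_social_gain_reset xy yi zx_ge0 zx_le)) ?subr_le0.
exists 0; last by apply: reset_at; right.
split; last by rewrite mul0r ltxx.
split; rewrite ?inO0 ?subrr ?normr0 ?normr_ge0 //.
case: (xy i) => yi; last by rewrite yi.
have zx_lt0 : z * x i < 0 by move: not_copy; rewrite yi eqxx /= -ltNge.
rewrite -subr_le0 (le_trans (C_social_gain_reset xy yi _ _)) ?mul0r ?normr0 //.
by rewrite subr_le0 (C_social0_le_crossing zx_lt0).
Qed.

Lemma legal_reset_no_crossing (s : seq ('I_n * int)) (x y : state n) :
  partial_reset x y -> legal m M 0 W x s ->
  exists s', [/\ legal m M 0 W y s', no_crossing 0 y s' &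
     (consensus0 n \in traj x s -> consensus0 n \in traj y s')].
Proof.
elim: s x y => [|[i z] s IH] x y xy /=.
  move=> _; exists [::]; split => //=.
  by rewrite !inE => /eqP/esym/(partial_reset_consensus0 xy) ->.
case=> /(inP_reset_step xy) [v [yv no_cross] xy'] /(IH _ _ xy') [s' [ls' ncs' trs']].
exists ((i, v) :: s'); split => /=; rewrite ?subr0 ?no_cross ?ncs' //.
rewrite !inE => /orP [/eqP/esym/(partial_reset_consensus0 xy) -> | /trs' ->].
  by rewrite eqxx.
by rewrite orbT.
Qed.

End ResetShadow.

Theorem lemma3 (R : realType) (n m M : nat) (W : 'M[R]_n) (x0 : state n) :
  (1 <= n)%N -> (1 <= m)%N -> (1 <= M)%N ->
  row_stochastic W ->
  (forall j, inO m M (x0 j)) ->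
  (exists s : seq ('I_n * int),
      legal m M 0 W x0 s /\ consensus0 n \in traj x0 s) ->
  exists s : seq ('I_n * int),
    [/\ legal m M 0 W x0 s, no_crossing 0 x0 s & consensus0 n \in traj x0 s].
Proof.
move=> _ _ _ [W_ge0 _] _ [s [ls trs]].
have [s' [ls' ncs' trs']] :=
  legal_reset_no_crossing W_ge0 (partial_reset_refl x0) ls.
by exists s'; split; last exact: trs'.
Qed.
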